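(* Let $a,b,g,h>0$ and let $\theta,\psi\in\mathbb{R}$ satisfy the constraint $$(g+b\,\mathrm{ch}\,\psi-a\,\mathrm{ch}\,\theta)^2-(b\,\mathrm{sh}\,\psi-a\,\mathrm{sh}\,\theta)^2=h^2 .$$ Put $A(\theta)=2gb-2ab\,\mathrm{ch}\,\theta$, $B(\theta)=2ab\,\mathrm{sh}\,\theta$, $C(\theta)=h^2-g^2-b^2-a^2+2ag\,\mathrm{ch}\,\theta$, and assume $A(\theta)+C(\theta)\neq 0$. Then $B(\theta)^2+C(\theta)^2-A(\theta)^2\ge 0$ and, for one choice of the sign $\pm$, $$\psi=2\,\mathrm{artanh}\,\frac{-B(\theta)\pm\sqrt{B(\theta)^2+C(\theta)^2-A(\theta)^2}}{A(\theta)+C(\theta)} .$$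
   Context: $\mathrm{ch},\mathrm{sh}$ denote the hyperbolic cosine and sine and $\mathrm{artanh}$ the inverse hyperbolic tangent. Interpretation: a Minkowskian planar 4R linkage in $\mathbb{R}^2$ with Lorentzian form $\langle u,v\rangle=u_1v_1-u_2v_2$ has fixed pivots $O=(0,0)$, $C=(g,0)$, moving pivots $A=(a\,\mathrm{ch}\,\theta,a\,\mathrm{sh}\,\theta)$ (input crank angle $\theta$) and $B=(g+b\,\mathrm{ch}\,\psi,b\,\mathrm{sh}\,\psi)$ (output crank angle $\psi$), and the coupler condition is $\langle B-A,B-A\rangle=h^2$, which is the displayed constraint. *)

From Stdlib Require Import Reals.
Open Scope R_scope.

Definition artanh (x : R) : R := / 2 * ln ((1 + x) / (1 - x)).

(* Squaring out the coupler condition and using ch^2 - sh^2 = 1 turns it into the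
   linear relation A ch psi + B sh psi = C.  The half-angle substitution
   t = th (psi/2), i.e. ch psi = (1 + t^2)/(1 - t^2) and sh psi = 2t/(1 - t^2),
   makes this the quadratic (A + C) t^2 + 2 B t + (A - C) = 0, whose reduced
   discriminant is B^2 + C^2 - A^2; t is one of its two roots, lies in (-1, 1),
   and psi = 2 artanh t. *)

From Stdlib Require Import Reals Lra Psatz.
Open Scope R_scope.

Lemma cosh_sq_sub_sinh_sq (x : R) : cosh x ^ 2 - sinh x ^ 2 = 1.
Proof.
  unfold cosh, sinh. rewrite exp_Ropp.
  assert (Hx := exp_pos x). field. lra.
Qed.

Lemma exp_double (y : R) : exp (2 * y) = exp y ^ 2.
Proof. replace (2 * y) with (y + y) by ring. rewrite exp_plus. ring. Qed.

Lemma tanh_exp (y : R) : tanh y = (exp y ^ 2 - 1) / (exp y ^ 2 + 1).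
Proof.
  unfold tanh, sinh, cosh. rewrite exp_Ropp.
  assert (Hy := exp_pos y). field. split; nra.
Qed.

Lemma tanh_bound (y : R) : -1 < tanh y < 1.
Proof.
  rewrite tanh_exp. assert (Hu : 0 < exp y ^ 2) by (apply pow_lt, exp_pos).
  split; apply Rmult_lt_reg_r with (exp y ^ 2 + 1);
    try lra; unfold Rdiv; rewrite Rmult_assoc, Rinv_l; lra.
Qed.

Lemma artanh_tanh (y : R) : artanh (tanh y) = y.
Proof.
  unfold artanh. assert (Hu : 0 < exp y ^ 2) by (apply pow_lt, exp_pos).
  replace ((1 + tanh y) / (1 - tanh y)) with (exp (2 * y)).
  - rewrite ln_exp. field.
  - rewrite exp_double, tanh_exp. field. lra.
Qed.

Lemma cosh_double_tanh (y : R) : cosh (2 * y) * (1 - tanh y ^ 2) = 1 + tanh y ^ 2.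
Proof.
  unfold cosh. rewrite exp_Ropp, exp_double, tanh_exp.
  assert (Hy := exp_pos y). field. split; nra.
Qed.

Lemma sinh_double_tanh (y : R) : sinh (2 * y) * (1 - tanh y ^ 2) = 2 * tanh y.
Proof.
  unfold sinh. rewrite exp_Ropp, exp_double, tanh_exp.
  assert (Hy := exp_pos y). field. split; nra.
Qed.

Lemma tanh_half_quadratic (A B C x : R) :
  A * cosh x + B * sinh x = C ->
  (A + C) * tanh (x / 2) ^ 2 + 2 * B * tanh (x / 2) + (A - C) = 0.
Proof.
  intro Hlin. set (t := tanh (x / 2)).
  pose proof (cosh_double_tanh (x / 2)) as Hch. pose proof (sinh_double_tanh (x / 2)) as Hsh.
  replace (2 * (x / 2)) with x in Hch, Hsh by field. fold t in Hch, Hsh.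
  transitivity (A * (1 + t ^ 2) + B * (2 * t) - C * (1 - t ^ 2)); [ring|].
  rewrite <- Hch, <- Hsh.
  transitivity ((A * cosh x + B * sinh x - C) * (1 - t ^ 2)); [ring|].
  rewrite Hlin. ring.
Qed.

Lemma quadratic_even_root (p q r t : R) :
  p <> 0 -> p * t ^ 2 + 2 * q * t + r = 0 ->
  0 <= q ^ 2 - p * r /\
  exists s : R, (s = 1 \/ s = -1) /\ t = (- q + s * sqrt (q ^ 2 - p * r)) / p.
Proof.
  intros Hp Hroot.
  assert (Hdisc : q ^ 2 - p * r = (p * t + q) ^ 2)
    by (transitivity ((p * t + q) ^ 2 - p * (p * t ^ 2 + 2 * q * t + r)); [ring|];
        rewrite Hroot; ring).
  rewrite Hdisc. split; [apply pow2_ge_0|].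
  destruct (Rle_dec 0 (p * t + q)) as [Hnn | Hneg].
  - exists 1. split; [now left|].
    rewrite sqrt_pow2 by exact Hnn. field. exact Hp.
  - exists (-1). split; [now right|].
    replace ((p * t + q) ^ 2) with ((- (p * t + q)) ^ 2) by ring.
    rewrite sqrt_pow2 by lra. field. exact Hp.
Qed.

Lemma coupler_linear_relation (a b g h theta psi : R) :
  (g + b * cosh psi - a * cosh theta) ^ 2 - (b * sinh psi - a * sinh theta) ^ 2 = h ^ 2 ->
  (2 * g * b - 2 * a * b * cosh theta) * cosh psi + (2 * a * b * sinh theta) * sinh psi
  = h ^ 2 - g ^ 2 - b ^ 2 - a ^ 2 + 2 * a * g * cosh theta.
Proof.
  intro Hcoupler. rewrite <- Hcoupler.
  pose proof (cosh_sq_sub_sinh_sq psi) as Hpsi. pose proof (cosh_sq_sub_sinh_sq theta) as Htheta.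
  transitivity ((2 * g * b - 2 * a * b * cosh theta) * cosh psi
                + (2 * a * b * sinh theta) * sinh psi
                + b ^ 2 * (cosh psi ^ 2 - sinh psi ^ 2 - 1)
                + a ^ 2 * (cosh theta ^ 2 - sinh theta ^ 2 - 1));
    [rewrite Hpsi, Htheta; ring | ring].
Qed.

Theorem mainTheorem3 (a b g h theta psi : R) :
  0 < a -> 0 < b -> 0 < g -> 0 < h ->
  (g + b * cosh psi - a * cosh theta) ^ 2 - (b * sinh psi - a * sinh theta) ^ 2 = h ^ 2 ->
  let A := 2 * g * b - 2 * a * b * cosh theta in
  let B := 2 * a * b * sinh theta in
  let C := h ^ 2 - g ^ 2 - b ^ 2 - a ^ 2 + 2 * a * g * cosh theta in
  A + C <> 0 ->
  0 <= B ^ 2 + C ^ 2 - A ^ 2 /\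
  exists s : R, (s = 1 \/ s = -1) /\
    let x := (- B + s * sqrt (B ^ 2 + C ^ 2 - A ^ 2)) / (A + C) in
    -1 < x < 1 /\ psi = 2 * artanh x.
Proof.
  intros _ _ _ _ Hcoupler A B C HAC.
  pose proof (tanh_half_quadratic A B C psi (coupler_linear_relation _ _ _ _ _ _ Hcoupler)) as Hquad.
  destruct (quadratic_even_root _ _ _ _ HAC Hquad) as [Hdisc [s [Hs Hroot]]].
  replace (B ^ 2 - (A + C) * (A - C)) with (B ^ 2 + C ^ 2 - A ^ 2) in * by ring.
  split; [exact Hdisc|]. exists s. split; [exact Hs|]. cbv zeta.
  rewrite <- Hroot, artanh_tanh. split; [apply tanh_bound | field].
Qed.
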